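(* Let $\alpha,\beta\in\mathbb{R}$ and $\eta\in\{1,-1\}$, and let $G_4$ be the connected, simply connected Lie group whose Lie algebra $\mathfrak{g}_4$ has a basis $\{e_1,e_2,e_3\}$ with $[e_1,e_2]=-e_2+(2\eta-\beta)e_3$, $[e_1,e_3]=-\beta e_2+e_3$, $[e_2,e_3]=\alpha e_1$, equipped with the left-invariant Lorentzian metric $g$ for which $\{e_1,e_2,e_3\}$ is pseudo-orthonormal with $e_3$ timelike, and with the product structure $J$. Then $(G_4,g,J)$ is not an algebraic Schouten soliton associated to the Kobayashi–Nomizu connection $\nabla^1$: for no real numbers $\lambda_0,c$ does there exist a derivation $D$ of $\mathfrak{g}_4$ with $\widetilde{\mathrm{Ric}}^1=(s^1\lambda_0+c)\mathrm{Id}+D$.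
   Context: Pseudo-orthonormal means $g(e_1,e_1)=g(e_2,e_2)=1$, $g(e_3,e_3)=-1$, $g(e_i,e_j)=0$ for $i\neq j$; left-invariant tensors are identified with their values on $\mathfrak{g}$. $\nabla$ is the Levi-Civita connection of $g$. The product structure $J$ is the left-invariant endomorphism with $Je_1=e_1$, $Je_2=e_2$, $Je_3=-e_3$. The canonical connection is $\nabla^0_XY=\nabla_XY-\frac12(\nabla_XJ)JY$, and the Kobayashi–Nomizu connection is $\nabla^1_XY=\nabla^0_XY-\frac14[(\nabla_YJ)JX-(\nabla_{JY}J)X]$. For $k=0,1$: $R^k(X,Y)Z=\nabla^k_X\nabla^k_YZ-\nabla^k_Y\nabla^k_XZ-\nabla^k_{[X,Y]}Z$; $\rho^k(X,Y)=-g(R^k(X,e_1)Y,e_1)-g(R^k(X,e_2)Y,e_2)+g(R^k(X,e_3)Y,e_3)$; $\widetilde\rho^k(X,Y)=\frac12(\rho^k(X,Y)+\rho^k(Y,X))$; $\widetilde{\mathrm{Ric}}^k$ is defined by $\widetilde\rho^k(X,Y)=g(\widetilde{\mathrm{Ric}}^k(X),Y)$; and $s^k=\widetilde\rho^k(e_1,e_1)+\widetilde\rho^k(e_2,e_2)-\widetilde\rho^k(e_3,e_3)$. A derivation of $\mathfrak{g}$ is a linear map $D$ with $D[X,Y]=[DX,Y]+[X,DY]$. $(G,g,J)$ is an algebraic Schouten soliton associated to $\nabla^k$ (with real constants $\lambda_0,c$) if $\widetilde{\mathrm{Ric}}^k=(s^k\lambda_0+c)\mathrm{Id}+D$ for some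 derivation $D$. *)

From Stdlib Require Import Reals.
Open Scope R_scope.

(** The Lie algebra g_4 is modelled as R^3 with coordinates w.r.t. the
    basis {e1,e2,e3}.  All tensors are left-invariant and identified with
    their values on the Lie algebra. *)
Record vec := mkV { v1 : R; v2 : R; v3 : R }.

Definition e1 : vec := mkV 1 0 0.
Definition e2 : vec := mkV 0 1 0.
Definition e3 : vec := mkV 0 0 1.

Definition vadd (X Y : vec) : vec := mkV (v1 X + v1 Y) (v2 X + v2 Y) (v3 X + v3 Y).
Definition vscale (a : R) (X : vec) : vec := mkV (a * v1 X) (a * v2 X) (a * v3 X).
Definition vsub (X Y : vec) : vec := vadd X (vscale (-1) Y).

Definition gmet (X Y : vec) : R := v1 X * v1 Y + v2 X * v2 Y - v3 X * v3 Y.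

(** Lie bracket of g_4 (bilinear extension of the structure equations)
    [e1,e2] = -e2 + (2 eta - beta) e3, [e1,e3] = -beta e2 + e3,
    [e2,e3] = alpha e1. *)
Definition br12 (alpha beta eta : R) : vec := mkV 0 (-1) (2 * eta - beta).
Definition br13 (alpha beta eta : R) : vec := mkV 0 (- beta) 1.
Definition br23 (alpha beta eta : R) : vec := mkV alpha 0 0.

Definition bracket (alpha beta eta : R) (X Y : vec) : vec :=
  vadd (vscale (v1 X * v2 Y - v2 X * v1 Y) (br12 alpha beta eta))
   (vadd (vscale (v1 X * v3 Y - v3 X * v1 Y) (br13 alpha beta eta))
         (vscale (v2 X * v3 Y - v3 X * v2 Y) (br23 alpha beta eta))).

(** Levi-Civita connection on left-invariant fields, via the Koszul formula
    2 g(nabla_X Y, Z) = g([X,Y],Z) - g([Y,Z],X) + g([Z,X],Y),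
    and expansion in the pseudo-orthonormal basis
    V = g(V,e1) e1 + g(V,e2) e2 - g(V,e3) e3. *)
Definition koszul (a b h : R) (X Y Z : vec) : R :=
  / 2 * (gmet (bracket a b h X Y) Z - gmet (bracket a b h Y Z) X
         + gmet (bracket a b h Z X) Y).

Definition nabla (a b h : R) (X Y : vec) : vec :=
  mkV (koszul a b h X Y e1) (koszul a b h X Y e2) (- koszul a b h X Y e3).

Definition Jop (X : vec) : vec := mkV (v1 X) (v2 X) (- v3 X).

Definition nablaJ (a b h : R) (X Y : vec) : vec :=
  vsub (nabla a b h X (Jop Y)) (Jop (nabla a b h X Y)).

Definition nabla0 (a b h : R) (X Y : vec) : vec :=
  vsub (nabla a b h X Y) (vscale (/ 2) (nablaJ a b h X (Jop Y))).

Definition nabla1 (a b h : R) (X Y : vec) : vec :=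
  vsub (nabla0 a b h X Y)
       (vscale (/ 4) (vsub (nablaJ a b h Y (Jop X)) (nablaJ a b h (Jop Y) X))).

Definition curv1 (a b h : R) (X Y Z : vec) : vec :=
  vsub (vsub (nabla1 a b h X (nabla1 a b h Y Z)) (nabla1 a b h Y (nabla1 a b h X Z)))
       (nabla1 a b h (bracket a b h X Y) Z).

Definition rho1 (a b h : R) (X Y : vec) : R :=
  - gmet (curv1 a b h X e1 Y) e1 - gmet (curv1 a b h X e2 Y) e2
  + gmet (curv1 a b h X e3 Y) e3.

Definition rho1sym (a b h : R) (X Y : vec) : R :=
  / 2 * (rho1 a b h X Y + rho1 a b h Y X).

(** Ricci operator: g(Ric X, Y) = rho~(X,Y). *)
Definition Ric1 (a b h : R) (X : vec) : vec :=
  mkV (rho1sym a b h X e1) (rho1sym a b h X e2) (- rho1sym a b h X e3).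

Definition scal1 (a b h : R) : R :=
  rho1sym a b h e1 e1 + rho1sym a b h e2 e2 - rho1sym a b h e3 e3.

Definition is_linear (D : vec -> vec) : Prop :=
  forall (s t : R) (X Y : vec), D (vadd (vscale s X) (vscale t Y)) = vadd (vscale s (D X)) (vscale t (D Y)).

Definition is_derivation (a b h : R) (D : vec -> vec) : Prop :=
  is_linear D /\
  forall X Y : vec, D (bracket a b h X Y) = vadd (bracket a b h (D X) Y) (bracket a b h X (D Y)).

Definition algebraic_schouten_soliton1 (a b h lambda0 c : R) : Prop :=
  exists D : vec -> vec, is_derivation a b h D /\
    forall X : vec, Ric1 a b h X = vadd (vscale (scal1 a b h * lambda0 + c) X) (D X).

(* In the basis e1, e2, e3 the Kobayashi-Nomizu connection of g_4 is very simple and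
   independent of eta, so Ric^1 is explicit.  A soliton forces D = Ric^1 - k Id with
   k = s^1 lambda0 + c; one component of the derivation identity on [e1,e2] determines k,
   and three others leave a polynomial system in alpha, beta, eta.  For eta = 1 (eta = -1
   reduces to it under (alpha, beta) |-> (-alpha, -beta)) the system gives alpha <> 0,
   hence alpha = 1 - 2 u^2 with u = beta - 1, and then forces both 2 u^3 = 1 and u^2 = 0. *)

From Stdlib Require Import Reals Lra.
Open Scope R_scope.

Tactic Notation "vec_simpl" :=
  cbv beta iota delta [bracket gmet br12 br13 br23 vsub vadd vscale e1 e2 e3 v1 v2 v3].
Tactic Notation "vec_simpl" "in" hyp(H) :=
  cbv beta iota delta [bracket gmet br12 br13 br23 vsub vadd vscale e1 e2 e3 v1 v2 v3] in H.

Lemma nabla_coords a b h X Y : nabla a b h X Y =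
  mkV (a / 2 * (v2 X * v3 Y - v3 X * v2 Y) - v2 X * v2 Y - v3 X * v3 Y
         - h * (v3 X * v2 Y + v2 X * v3 Y))
      (v2 X * v1 Y + (h + a / 2) * (v3 X * v1 Y + v1 X * v3 Y) - b * v1 X * v3 Y)
      ((h - b + a / 2) * v1 X * v2 Y + (a / 2 - h) * v2 X * v1 Y - v3 X * v1 Y).
Proof.
destruct X as [x1 x2 x3], Y as [y1 y2 y3].
unfold nabla, koszul; vec_simpl.
f_equal; field.
Qed.

Lemma nabla1_coords a b h X Y : nabla1 a b h X Y =
  mkV (- v2 X * v2 Y - a * v3 X * v2 Y) (v2 X * v1 Y + b * v3 X * v1 Y) (v1 X * v3 Y).
Proof.
destruct X as [x1 x2 x3], Y as [y1 y2 y3].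
unfold nabla1, nabla0, nablaJ, Jop; rewrite !nabla_coords; vec_simpl.
f_equal; field.
Qed.

Ltac ricci_compute :=
  unfold Ric1, rho1sym, rho1, curv1; rewrite !nabla1_coords; vec_simpl; f_equal; field.

Lemma Ric1_e1 a b h : Ric1 a b h e1 = mkV (2 * b * h - b ^ 2 - 1) 0 0.
Proof. ricci_compute. Qed.

Lemma Ric1_e2 a b h : Ric1 a b h e2 = mkV 0 (2 * a * h - a * b - 1) (- a / 2).
Proof. ricci_compute. Qed.

Lemma Ric1_e3 a b h : Ric1 a b h e3 = mkV 0 (a / 2) 0.
Proof. ricci_compute. Qed.

Lemma linear_from_basis (D : vec -> vec) (u1 u2 u3 : vec) :
  is_linear D -> D e1 = u1 -> D e2 = u2 -> D e3 = u3 ->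
  forall X, D X = vadd (vscale (v1 X) u1) (vadd (vscale (v2 X) u2) (vscale (v3 X) u3)).
Proof.
intros Hlin H1 H2 H3 [x1 x2 x3].
assert (HX : mkV x1 x2 x3 =
  vadd (vscale 1 (vadd (vscale x1 e1) (vscale x2 e2))) (vscale x3 e3)).
{ vec_simpl; f_equal; ring. }
rewrite HX, !Hlin, H1, H2, H3.
destruct u1, u2, u3; vec_simpl; f_equal; ring.
Qed.

Lemma vadd_eq_vsub (U V W : vec) : W = vadd U V -> V = vsub W U.
Proof. destruct U, V; intros ->; vec_simpl; f_equal; ring. Qed.

Section SolitonConstraints.

Variables (a b h k : R) (D : vec -> vec).
Hypothesis HD : is_derivation a b h D.
Hypothesis HRic : forall X, Ric1 a b h X = vadd (vscale k X) (D X).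

Lemma soliton_derivation_coords X :
  D X = mkV ((2 * b * h - b ^ 2 - 1 - k) * v1 X)
            ((2 * a * h - a * b - 1 - k) * v2 X + a / 2 * v3 X)
            (- a / 2 * v2 X - k * v3 X).
Proof.
destruct HD as [Hlin _].
rewrite (linear_from_basis D _ _ _ Hlin
           (vadd_eq_vsub _ _ _ (HRic e1)) (vadd_eq_vsub _ _ _ (HRic e2))
           (vadd_eq_vsub _ _ _ (HRic e3))).
rewrite Ric1_e1, Ric1_e2, Ric1_e3; vec_simpl; f_equal; field.
Qed.

Lemma soliton_polynomial_constraints :
  (2 * h - b) * (a * h - 1) = a /\
  b * (3 * a * h - 2 * a * b - 1) = a /\
  a * (4 * b * h - 2 * b ^ 2 - a * h - 1) = 0.
Proof.
destruct HD as [_ Hder].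
pose proof (Hder e1 e2) as H12; pose proof (Hder e1 e3) as H13; pose proof (Hder e2 e3) as H23.
rewrite !soliton_derivation_coords in H12, H13, H23.
vec_simpl in H12; vec_simpl in H13; vec_simpl in H23.
apply (f_equal v2) in H12 as H12_2; apply (f_equal v3) in H12 as H12_3.
apply (f_equal v2) in H13 as H13_2; apply (f_equal v1) in H23 as H23_1.
cbn [v1 v2 v3] in H12_2, H12_3, H13_2, H23_1.
assert (Hk : k = 2 * b * h - b ^ 2 - 1 - a * (b - h)) by lra.
subst k.
split; [|split]; lra.
Qed.

End SolitonConstraints.

Lemma soliton_system_eta1_unsolvable a b :
  (2 - b) * (a - 1) = a -> b * (3 * a - 2 * a * b - 1) = a ->
  a * (4 * b - 2 * b ^ 2 - a - 1) = 0 -> False.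
Proof.
intros Hi Hii Hiii.
assert (Ha : a <> 0) by (intros ->; lra).
assert (Ha_b : a = 1 - 2 * (b - 1) ^ 2).
{ destruct (Rmult_integral _ _ Hiii) as [H | H]; [contradiction | lra]. }
subst a.
assert (Hcube : 2 * (b - 1) ^ 3 = 1) by lra.
assert (Hsquare : (b - 1) ^ 2 = 0) by nra.
assert (Hb : b = 1) by nra.
subst b; lra.
Qed.

Lemma soliton_system_unsolvable a b h : h = 1 \/ h = -1 ->
  (2 * h - b) * (a * h - 1) = a ->
  b * (3 * a * h - 2 * a * b - 1) = a ->
  a * (4 * b * h - 2 * b ^ 2 - a * h - 1) = 0 -> False.
Proof.
intros [-> | ->] Hi Hii Hiii.
- apply (soliton_system_eta1_unsolvable a b); lra.
- apply (soliton_system_eta1_unsolvable (- a) (- b)); lra.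
Qed.

Theorem theorem4p9 (alpha beta eta : R) (Heta : eta = 1 \/ eta = -1) :
  forall lambda0 c : R, ~ algebraic_schouten_soliton1 alpha beta eta lambda0 c.
Proof.
intros lambda0 c [D [HD HRic]].
destruct (soliton_polynomial_constraints alpha beta eta _ D HD HRic) as (Hi & Hii & Hiii).
exact (soliton_system_unsolvable alpha beta eta Heta Hi Hii Hiii).
Qed.
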